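(* Let $\sigma:\mathcal{A}^*\to\mathcal{B}^*$ be a return morphism for two distinct words $w,w'\in\mathcal{B}^+$ with $|w|\le|w'|$, and let $X$ be a shift space over $\mathcal{A}$. Then: (1) $w$ is a proper prefix of $w'$; (2) $\sigma$ is a return morphism for every prefix of $w'$ of length at least $|w|$; (3) $w$ is not right special in $\sigma\cdot X$; (4) if $w'$ has maximal length among the words for which $\sigma$ is a return morphism, then $w'$ is right special in $\sigma\cdot X$.
   Context: $\mathcal{A},\mathcal{B}$ are finite alphabets. A shift space over $\mathcal{A}$ is a nonempty closed shift-invariant $X\subseteq\mathcal{A}^{\mathbb{Z}}$ whose language contains every letter of $\mathcal{A}$. Morphisms are non-erasing monoid morphisms extended to $\mathcal{A}^{\mathbb{Z}}$ by concatenation, and $\sigma\cdot X=\{S^k\sigma(x): x\in X, 0\le k<|\sigma(x_0)|\}$ where $S$ is the shift. A return morphism for $w\in\mathcal{B}^+$ is an injective morphism $\sigma:\mathcal{A}^*\to\mathcal{B}^*$ such that for every $a\in\mathcal{A}$, $\sigma(a)w$ contains exactly two occurrences of $w$, one as a proper prefix and one as a proper suffix. A word $u$ is right special in a shift $Y$ if there are at least two letters $b$ with $ub$ in the language of $Y$. *)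

From mathcomp Require Import all_boot all_order all_algebra.
Set Implicit Arguments. Unset Strict Implicit. Unset Printing Implicit Defensive.
Import Order.TTheory GRing.Theory Num.Theory.
Local Open Scope ring_scope.

Definition shiftS (T : Type) (x : int -> T) : int -> T := fun i => x (i + 1).

Definition in_lang (T : Type) (Y : (int -> T) -> Prop) (u : seq T) : Prop :=
  exists y i, Y y /\ u = [seq y (i + j%:Z) | j <- iota 0 (size u)].

(* Shift space over A: nonempty, closed (product topology, A discrete:
   a point all of whose central windows are approximated by points of X
   lies in X), shift-invariant (S X = X), every letter in the language. *)
Definition shift_space (A : finType) (X : (int -> A) -> Prop) : Prop :=
  [/\ exists x, X x,
      (forall x : int -> A,
          (forall n : nat, exists y, X y /\
             forall i : int, - (n%:Z) <= i <= n%:Z -> y i = x i) -> X x),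
      (forall x, X x <-> X (shiftS x)) &
      (forall a : A, in_lang X [:: a])].

Definition morph_word (A B : Type) (sigma : A -> seq B) (u : seq A) : seq B :=
  flatten (map sigma u).

Definition nonerasing (A B : Type) (sigma : A -> seq B) : Prop :=
  forall a, (size (sigma a) > 0)%N.

(* z = sigma(x): sigma(x_0) starts at position 0, concatenation. *)
Definition is_image (A B : Type) (sigma : A -> seq B) (x : int -> A) (z : int -> B) : Prop :=
  exists p : int -> int, p 0 = 0 /\
    (forall n, p (n + 1) = p n + (size (sigma (x n)))%:Z) /\
    (forall n, [seq z (p n + j%:Z) | j <- iota 0 (size (sigma (x n)))] = sigma (x n)).

Definition morph_act (A B : Type) (sigma : A -> seq B) (X : (int -> A) -> Prop) :
  (int -> B) -> Prop :=
  fun y => exists x z (k : nat), [/\ X x, is_image sigma x z,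
     (k < size (sigma (x 0)))%N & forall i, y i = z (i + k%:Z)].

Definition occurs_at (B : eqType) (w s : seq B) (i : nat) : bool :=
  ((i + size w <= size s)%N && (take (size w) (drop i s) == w)).

Definition nb_occ (B : eqType) (w s : seq B) : nat :=
  count (occurs_at w s) (iota 0 (size s).+1).

Definition proper_prefix (B : eqType) (u v : seq B) : bool :=
  prefix u v && (size u < size v)%N.
Definition proper_suffix (B : eqType) (u v : seq B) : bool :=
  suffix u v && (size u < size v)%N.

Definition return_morphism (A B : finType) (sigma : A -> seq B) (w : seq B) : Prop :=
  [/\ nonerasing sigma,
      (forall u v, morph_word sigma u = morph_word sigma v -> u = v),
      w != [::] &
      forall a, [/\ nb_occ w (sigma a ++ w) = 2%N,
                    proper_prefix w (sigma a ++ w),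
                    occurs_at w (sigma a ++ w) 0 &
                    proper_suffix w (sigma a ++ w) /\
                    occurs_at w (sigma a ++ w) (size (sigma a))]].

Definition right_special (B : Type) (Y : (int -> B) -> Prop) (u : seq B) : Prop :=
  exists b1 b2 : B, b1 <> b2 /\ in_lang Y (rcons u b1) /\ in_lang Y (rcons u b2).

(* A return word w for sigma is a prefix of sigma(a) w, hence of the periodic
   word sigma(a)^oo, for every letter a; so two return words are comparable for
   the prefix order, and every word between them is again a return word.  In an
   image sigma(x) the occurrences of a return word are exactly the cut points
   between consecutive blocks sigma(x_n), and every cut point is followed by w':
   an occurrence of w in sigma.X is therefore always followed by the letter of
   w' at position |w|.  Finally every letter a occurs in X, so sigma(a) w'
   occurs in sigma.X; if w' is always followed by the same letter b, then w' b
   is a prefix of sigma(a) w' b for every a, i.e. a longer return word. *)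

From mathcomp Require Import all_boot all_order all_algebra zify.
Set Implicit Arguments. Unset Strict Implicit. Unset Printing Implicit Defensive.
Import Order.TTheory GRing.Theory Num.Theory.

Section Words.
Variable T : eqType.
Implicit Types s u v w : seq T.

Lemma prefix_prefix_leq u v s :
  prefix u s -> prefix v s -> (size u <= size v)%N -> prefix u v.
Proof.
rewrite !prefixE => /eqP su /eqP sv uv.
by rewrite -sv take_takel // su.
Qed.

Lemma prefix_cat2l s u v : prefix u v -> prefix (s ++ u) (s ++ v).
Proof. by case/prefixP=> t ->; rewrite catA prefix_prefix. Qed.

Lemma prefix_size_succ u v :
  prefix u v -> size v = (size u).+1 -> exists b, v = rcons u b.
Proof.
case/prefixP=> t ->; rewrite size_cat -addn1 => /eqP; rewrite eqn_add2l.
by case: t => [|b [|]] //= _; exists b; rewrite cats1.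
Qed.

Lemma occurs_at0 u s : occurs_at u s 0 = prefix u s.
Proof.
rewrite /occurs_at add0n drop0 -prefixE.
by apply/andP/idP => [[] // | pus]; rewrite (size_prefix pus).
Qed.

Lemma occurs_at_size_cat u v : occurs_at v (u ++ v) (size u).
Proof. by rewrite /occurs_at size_cat leqnn drop_size_cat // take_size eqxx. Qed.

Lemma occurs_at_prefix s u v i :
  prefix u v -> occurs_at v (s ++ v) i -> occurs_at u (s ++ u) i.
Proof.
move=> /[dup] /size_prefix uv /prefixP [t ->].
rewrite /occurs_at !size_cat => /andP [hi /eqP occ].
have hiu : (i + size u <= size s + size u)%N by lia.
rewrite hiu /= take_drop -(@takel_cat (size u + i) _ (s ++ u) t) ?size_cat;
  last by lia.
have := congr1 (take (size u)) occ.
by rewrite take_takel ?leq_addr // take_size_cat // -catA -take_drop => ->.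
Qed.

Lemma take_prefix m u w : prefix u w -> (m <= size u)%N -> take m w = take m u.
Proof. by case/prefixP=> t -> hm; rewrite takel_cat. Qed.

Lemma periodic_prefix s u v : (0 < size s)%N ->
  prefix u (s ++ u) -> prefix v (s ++ v) -> (size u <= size v)%N -> prefix u v.
Proof.
move=> s_gt0 pu pv uv.
suff take_uv m : (m <= size u)%N -> take m u = take m v.
  by rewrite prefixE -take_uv // take_size.
elim/ltn_ind: m => m IH hm.
rewrite -(take_prefix pu hm) -(take_prefix pv) ?(leq_trans hm) // !take_cat.
case: ltnP => // sm; congr (s ++ _); apply: IH; lia.
Qed.

Lemma count_eq2_uniq (p : pred T) r a b : uniq r -> a != b ->
  a \in r -> b \in r -> p a -> p b ->
  count p r = 2 <-> {in r, forall i, p i -> i = a \/ i = b}.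
Proof.
move=> ur ab ar br pa pb; rewrite -size_filter; split=> [r2 i ir pi | r_ab].
  case: (eqVneq i a) => [|ia]; first by left.
  case: (eqVneq i b) => [|ib]; first by right.
  have: (size [:: a; b; i] <= size (filter p r))%N.
    apply: uniq_leq_size; first by rewrite /= !inE negb_or ab eq_sym ia eq_sym ib.
    by move=> j; rewrite mem_filter !inE => /or3P [] /eqP ->; apply/andP.
  by rewrite r2.
apply/eqP; rewrite -(@uniq_size_uniq _ [:: a; b]) ?filter_uniq //=.
  by rewrite inE ab.
move=> i; rewrite mem_filter !inE; apply/idP/andP => [/orP [] /eqP -> //|[pi ir]].
by case: (r_ab i ir pi) => ->; rewrite eqxx ?orbT.
Qed.
End Words.

Lemma nb_occ_cat_eq2 (T : eqType) (s w : seq T) :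
  (0 < size s)%N -> prefix w (s ++ w) ->
  nb_occ w (s ++ w) = 2 <->
  (forall i, occurs_at w (s ++ w) i -> i = 0 \/ i = size s).
Proof.
move=> s_gt0 pw; rewrite /nb_occ (@count_eq2_uniq _ _ _ 0 (size s)) ?iota_uniq
  ?mem_iota ?occurs_at0 ?occurs_at_size_cat // ?size_cat; try lia.
split=> occ i; last by move=> _; apply: occ.
move=> /[dup] /andP [hi _]; apply: occ.
by rewrite mem_iota; move: hi; rewrite size_cat; lia.
Qed.

Section ReturnMorphisms.
Variables (A B : finType) (sigma : A -> seq B).

Lemma return_morphismP w : return_morphism sigma w <->
  [/\ nonerasing sigma, injective (morph_word sigma), w != [::] &
      forall a, prefix w (sigma a ++ w) /\
        forall i, occurs_at w (sigma a ++ w) i -> i = 0 \/ i = size (sigma a)].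
Proof.
have sizes a : nonerasing sigma -> (size w < size (sigma a ++ w))%N.
  by move/(_ a); rewrite size_cat; lia.
split=> [[ne inj w0 ret] | [ne inj w0 ret]]; split=> // a.
  have [occ2 /andP [pw _] _ _] := ret a.
  by split=> //; apply/nb_occ_cat_eq2 => //; apply: ne.
have [pw occ] := ret a.
rewrite /proper_prefix /proper_suffix pw suffix_suffix occurs_at0 pw
  occurs_at_size_cat sizes //.
by split=> //; apply/nb_occ_cat_eq2 => //; apply: ne.
Qed.

Lemma return_morphism_extend w v :
  return_morphism sigma w -> prefix w v ->
  (forall a, prefix v (sigma a ++ v)) -> return_morphism sigma v.
Proof.
case/return_morphismP=> ne inj w0 ret wv pv; apply/return_morphismP.
split=> //.
  by apply: contraNneq w0 => v0; move: wv; rewrite v0 prefixs0.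
move=> a; split=> // i /(occurs_at_prefix wv).
by have [_] := ret a; apply.
Qed.

Lemma return_prefix_comparable (a : A) w w' :
  return_morphism sigma w -> return_morphism sigma w' ->
  (size w <= size w')%N -> prefix w w'.
Proof.
case/return_morphismP=> ne _ _ /(_ a) [pw _] /return_morphismP [_ _ _ /(_ a) [pw' _]].
exact: periodic_prefix (ne a) pw pw'.
Qed.
End ReturnMorphisms.

Section Windows.
Local Open Scope ring_scope.
Variable T : Type.
Implicit Types (z : int -> T) (q : int).

Definition window z q (n : nat) : seq T := [seq z (q + j%:Z) | j <- iota 0 n].

Lemma size_window z q n : size (window z q n) = n.
Proof. by rewrite size_map size_iota. Qed.

Lemma nth_window (d : T) z q n j : (j < n)%N -> nth d (window z q n) j = z (q + j%:Z).
Proof. by move=> hj; rewrite (nth_map 0%N) ?size_iota // nth_iota. Qed.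

Lemma window_add z q m n : window z q (m + n) = window z q m ++ window z (q + m%:Z) n.
Proof.
rewrite /window iotaD map_cat add0n -[X in iota X n]addn0 iotaDl -map_comp.
by congr (_ ++ _); apply: eq_map => j /=; rewrite PoszD addrA.
Qed.

Lemma take_window z q m n : take m (window z q n) = window z q (minn m n).
Proof. by rewrite /window -map_take take_iota. Qed.

Lemma take_drop_window z q i m n : (i + m <= n)%N ->
  take m (drop i (window z q n)) = window z (q + i%:Z) m.
Proof.
move=> h; rewrite -(subnKC (leq_trans (leq_addr m i) h)) window_add.
by rewrite drop_size_cat ?size_window // take_window; congr window; lia.
Qed.

Lemma window_shift (y z : int -> T) (k : int) q n :
  (forall i, y i = z (i + k)) -> window y q n = window z (q + k) n.
Proof. by move=> yz; apply: eq_map => j; rewrite yz addrAC. Qed.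

Lemma in_lang_take (Y : (int -> T) -> Prop) u n : in_lang Y u -> in_lang Y (take n u).
Proof.
case=> y [i [Yy u_win]]; exists y, i; split=> //.
by rewrite size_take_min {1}u_win take_window.
Qed.
End Windows.

Section IncreasingInt.
Local Open Scope ring_scope.
Variable f : int -> int.
Hypothesis f_incr : forall n, f n < f (n + 1).

Lemma incr_addn n (k : nat) : f n + k%:Z <= f (n + k%:Z).
Proof.
elim: k => [|k IH]; first by rewrite !addr0.
have := f_incr (n + k%:Z); rewrite (_ : n + k.+1%:Z = n + k%:Z + 1); lia.
Qed.

Lemma incr_le : {homo f : m n / m <= n}.
Proof.
move=> m n mn; have := incr_addn m `|n - m|%N.
rewrite (_ : m + `|n - m|%N%:Z = n); lia.
Qed.

Lemma incr_locate (q : int) : exists n, f n <= q < f (n + 1).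
Proof.
have walk (k : nat) m : f m <= q < f (m + k%:Z) -> exists n, f n <= q < f (n + 1).
  elim: k m => [|k IH] m; first by rewrite addr0; lia.
  case: (ltP q (f (m + k%:Z))) => [q_lt fm_q|fk_le /andP [_ q_lt]].
    by apply: (IH m); lia.
  by exists (m + k%:Z); rewrite fk_le (_ : m + k%:Z + 1 = m + k.+1%:Z) //; lia.
pose N := `|q - f 0|%N.+1.
have N_gt : f 0 - N%:Z < q < f 0 + N%:Z by rewrite /N; lia.
apply: (walk (N + N)%N (- N%:Z)).
move: N_gt; have := incr_addn (- N%:Z) N; have := incr_addn 0 N.
rewrite add0r addNr (_ : - N%:Z + (N + N)%N%:Z = N%:Z); last by lia.
(* [set] identifies the two convertible but syntactically distinct [f 0]
   produced by the rewrites, which [lia] would treat as different atoms. *)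
set f0 := f 0; clearbody N f0; lia.
Qed.

Lemma incr_locate_uniq (m n q : int) :
  f m <= q < f (m + 1) -> f n <= q < f (n + 1) -> m = n.
Proof.
move=> /andP [fm_q q_fm] /andP [fn_q q_fn].
case: (ltgtP m n) => // [mn | nm].
  by have := incr_le (_ : m + 1 <= n); lia.
by have := incr_le (_ : n + 1 <= m); lia.
Qed.
End IncreasingInt.

Lemma exists_partial_sums (g : int -> int) :
  exists p : int -> int, p 0%R = 0%R /\ forall n, p (n + 1)%R = (p n + g n)%R.
Proof.
exists (fun n => match n with
  | Posz m => \sum_(k < m) g k
  | Negz m => - \sum_(k < m.+1) g (Negz k) end)%R.
split=> [|[m|[|m]]]; first exact: big_ord0.
- by rewrite (_ : (Posz m + 1 = Posz m.+1)%R) ?big_ord_recr //; lia.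
- by rewrite big_ord_recr big_ord0 /= add0r addNr; exact: big_ord0.
rewrite (_ : (Negz m.+1 + 1 = Negz m)%R); last by rewrite !NegzE; lia.
by rewrite [in RHS]big_ord_recr /= opprD addrNK.
Qed.

Section Images.
Local Open Scope ring_scope.
Variables (A B : finType) (sigma : A -> seq B).
Hypothesis ne : nonerasing sigma.

Section Cuts.
Variables (x : int -> A) (z : int -> B) (p : int -> int).
Hypothesis p_succ : forall n, p (n + 1) = p n + (size (sigma (x n)))%:Z.
Hypothesis window_cut : forall n, window z (p n) (size (sigma (x n))) = sigma (x n).

Lemma cut_incr n : p n < p (n + 1).
Proof. by rewrite p_succ; have := ne (x n); lia. Qed.

Lemma window_cut_return w : return_morphism sigma w ->
  forall n, window z (p n) (size w) = w.
Proof.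
case/return_morphismP=> _ _ _ ret.
suff win m n : (m <= size w)%N -> window z (p n) m = take m w.
  by move=> n; rewrite win // take_size.
elim/ltn_ind: m n => m IH n hm; have [pw _] := ret (x n).
rewrite -(take_prefix pw hm) take_cat; case: ltnP => [lt_m | le_m].
  by rewrite -window_cut take_window (minn_idPl (ltnW lt_m)).
rewrite -{1}(subnKC le_m) window_add window_cut -p_succ IH //.
  by rewrite ltn_subrL ne (leq_trans (ne _) le_m).
exact: leq_trans (leq_subr _ _) hm.
Qed.

Lemma window_cut_cat w : return_morphism sigma w ->
  forall n, window z (p n) (size (sigma (x n)) + size w) = sigma (x n) ++ w.
Proof.
by move=> Rw n; rewrite window_add window_cut -p_succ (window_cut_return Rw).
Qed.

Lemma return_window_cut w q : return_morphism sigma w ->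
  window z q (size w) = w -> exists n, q = p n.
Proof.
move=> Rw win_q; have [n /andP [pn_q q_pn]] := incr_locate cut_incr q.
have [i q_def] : exists i : nat, q = p n + i%:Z by exists `|q - p n|%N; lia.
have i_lt : (i < size (sigma (x n)))%N by move: q_pn; rewrite p_succ; lia.
have occ_i : occurs_at w (sigma (x n) ++ w) i.
  have i_w : (i + size w <= size (sigma (x n)) + size w)%N.
    by rewrite leq_add2r ltnW.
  rewrite /occurs_at size_cat i_w -(window_cut_cat Rw) take_drop_window //.
  by rewrite -q_def win_q eqxx.
exists n; case/return_morphismP: Rw => _ _ _ /(_ (x n)) [_ /(_ i occ_i)].
by rewrite q_def; lia.
Qed.
End Cuts.

Lemma image_exists x : exists z, is_image sigma x z.
Proof.
have [d _] : exists d : B, True.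
  by move: (ne (x 0)); case: (sigma (x 0)) => // d; exists d.
have [p [p0 p_succ]] := exists_partial_sums (fun n => (size (sigma (x n)))%:Z).
pose c q := xchoose (incr_locate (cut_incr p_succ) q).
pose z q := nth d (sigma (x (c q))) `|q - p (c q)|%N.
exists z, p; split=> //; split=> // n; rewrite -[LHS]/(window z (p n) _).
apply: (eq_from_nth (x0 := d)); rewrite size_window //.
move=> j lt_j; rewrite nth_window // /z.
have -> : c (p n + j%:Z) = n.
  apply: (incr_locate_uniq (cut_incr p_succ) (xchooseP (incr_locate _ _))).
  by rewrite p_succ; lia.
by congr nth; lia.
Qed.
End Images.

Lemma return_morphism_between (A B : finType) (sigma : A -> seq B) w v w' :
  return_morphism sigma w -> return_morphism sigma w' ->
  prefix w v -> prefix v w' -> return_morphism sigma v.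
Proof.
move=> Rw /return_morphismP [_ _ _ ret'] wv vw'.
apply: (return_morphism_extend Rw wv) => a; have [pw' _] := ret' a.
apply: (prefix_prefix_leq (prefix_trans vw' pw') (prefix_cat2l _ vw')).
by rewrite size_cat leq_addl.
Qed.

Section MorphAct.
Local Open Scope ring_scope.
Variables (A B : finType) (sigma : A -> seq B) (X : (int -> A) -> Prop).

Lemma lang_morph_act_return_prefix w w' u :
  return_morphism sigma w -> return_morphism sigma w' ->
  prefix w u -> (size u <= size w')%N ->
  in_lang (morph_act sigma X) u -> prefix u w'.
Proof.
move=> Rw Rw' wu uw' [y [i [[x [z [k [_ [p [_ [p_succ win]]] _ y_z]]]] u_win]]].
have ne : nonerasing sigma by case/return_morphismP: Rw.
move: u_win; rewrite -[X in u = X]/(window y i _) (window_shift _ _ y_z) => u_win.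
have [n ik_cut] : exists n, i + k%:Z = p n.
  apply: (return_window_cut ne p_succ win Rw).
  rewrite -[RHS]take_size -(take_prefix wu) // [in RHS]u_win take_window.
  by rewrite (minn_idPl (size_prefix wu)).
rewrite prefixE -(window_cut_return ne p_succ win Rw' n) take_window (minn_idPl uw').
by rewrite -ik_cut -u_win.
Qed.

Lemma lang_morph_act_cat w a : return_morphism sigma w ->
  in_lang X [:: a] -> in_lang (morph_act sigma X) (sigma a ++ w).
Proof.
move=> Rw [x [i [Xx [xa]]]].
have ne : nonerasing sigma by case/return_morphismP: Rw.
have [z [p [p0 [p_succ win]]]] := image_exists ne x.
exists z, (p i); split.
  by exists x, z, 0%N; split=> //; [exists p | move=> j; rewrite addr0].
by rewrite xa addr0 size_cat; apply/esym/(window_cut_cat ne p_succ win Rw).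
Qed.

Lemma return_not_right_special w w' :
  return_morphism sigma w -> return_morphism sigma w' -> (size w < size w')%N ->
  ~ right_special (morph_act sigma X) w.
Proof.
move=> Rw Rw' lt_ww' [b1 [b2 [b12 [L1 L2]]]]; apply: b12.
have take_w' b : in_lang (morph_act sigma X) (rcons w b) ->
    take (size w).+1 w' = rcons w b.
  move=> Lb; apply/eqP; rewrite -(size_rcons w b) -prefixE.
  apply: (lang_morph_act_return_prefix Rw Rw') => //; first exact: prefix_rcons.
  by rewrite size_rcons.
by have [] := rcons_inj (etrans (esym (take_w' _ L1)) (take_w' _ L2)).
Qed.

Lemma maximal_return_right_special w' (a0 : A) :
  return_morphism sigma w' -> (forall a, in_lang X [:: a]) ->
  (forall v, return_morphism sigma v -> (size v <= size w')%N) ->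
  right_special (morph_act sigma X) w'.
Proof.
move=> Rw' lang_X max_w'; have /return_morphismP [ne _ _ ret'] := Rw'.
pose u a := take (size w').+1 (sigma a ++ w').
have w'_u a : prefix w' (u a).
  have [pw' _] := ret' a.
  by rewrite prefixE take_takel // -prefixE.
have size_u a : size (u a) = (size w').+1.
  by rewrite size_takel // size_cat addnC -addn1 leq_add2l ne.
have lang_u a : in_lang (morph_act sigma X) (u a).
  exact/in_lang_take/(lang_morph_act_cat Rw' (lang_X a)).
case: (boolP [forall a, u a == u a0]) => [/forallP u_const | /forallPn [a ua]].
  suff /max_w' : return_morphism sigma (u a0) by rewrite size_u ltnn.
  apply: (return_morphism_extend Rw' (w'_u a0)) => a.
  rewrite -(eqP (u_const a)); apply: prefix_trans (prefix_take _ _) _.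
  exact/prefix_cat2l/w'_u.
have [b1 u_b1] := prefix_size_succ (w'_u a) (size_u a).
have [b2 u_b2] := prefix_size_succ (w'_u a0) (size_u a0).
exists b1, b2; split; last by rewrite -u_b1 -u_b2; split; apply: lang_u.
by move=> b12; move: ua; rewrite u_b1 u_b2 b12 eqxx.
Qed.
End MorphAct.

Theorem mainTheorem3 (A B : finType) (sigma : A -> seq B) (w w' : seq B)
  (X : (int -> A) -> Prop) :
  w <> w' -> return_morphism sigma w -> return_morphism sigma w' ->
  (size w <= size w')%N -> shift_space X ->
  [/\ proper_prefix w w',
      (forall v, prefix v w' -> (size w <= size v)%N -> return_morphism sigma v),
      ~ right_special (morph_act sigma X) w &
      ((forall v, return_morphism sigma v -> (size v <= size w')%N) ->
        right_special (morph_act sigma X) w')].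
Proof.
move=> ww' Rw Rw' le_ww' [[x0 _] _ _ lang_X].
have pww' := return_prefix_comparable (x0 0) Rw Rw' le_ww'.
have lt_ww' : (size w < size w')%N.
  rewrite ltn_neqAle le_ww' andbT; apply/negP => /eqP eq_size; apply: ww'.
  by apply/eqP; move: pww'; rewrite prefixE eq_size take_size eq_sym.
split.
- by rewrite /proper_prefix pww'.
- move=> v vw' wv; apply: (return_morphism_between Rw Rw' _ vw').
  exact: prefix_prefix_leq pww' vw' wv.
- exact: return_not_right_special Rw Rw' lt_ww'.
- exact: maximal_return_right_special (x0 0) Rw' lang_X.
Qed.
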